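(* Let $K$ be a field and $A,B\in M_n(K)$. Then $\dim\ker M(A,B)\ge n\sum (m-1)$, where $m$ runs over the geometric multiplicities of the distinct eigenvalues of $B$ lying in $K$.
   Context: For a commutative ring $R$ with $1$ and $A,B\in M_n(R)$, $M(A,B)\in M_{n^2}(R)$ is the block matrix consisting of $n\times n$ blocks whose $(i,j)$-th block is $A^{j-1}B^{i-1}$ ($i,j=1,\dots,n$); it acts on $K^{n^2}$ viewed as column vectors. *)

From HB Require Import structures.
From mathcomp Require Import all_boot all_order all_algebra.
Set Implicit Arguments. Unset Strict Implicit. Unset Printing Implicit Defensive.
Import GRing.Theory.
Local Open Scope ring_scope.

Definition Mblock (K : fieldType) (n : nat) (A B : 'M[K]_n)
  : 'M[K]_(\sum_(i < n) n, \sum_(j < n) n) :=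
  \mxblock_(i < n, j < n) (A ^+ j *m B ^+ i).

(* dimension of the kernel of M acting on column vectors, i.e. of
   {v | M *m v = 0} = left kernel of M^T *)
Definition dimker (K : fieldType) (p q : nat) (M : 'M[K]_(p, q)) : nat :=
  \rank (kermx M^T).

Definition geom_mult (K : fieldType) (n : nat) (B : 'M[K]_n) (a : K) : nat :=
  dimker (B - a%:M).

From mathcomp Require Import all_boot all_order all_algebra.
Set Implicit Arguments. Unset Strict Implicit. Unset Printing Implicit Defensive.
Import GRing.Theory.
Local Open Scope ring_scope.

(* If every block v_j of v = (v_0, ..., v_{n-1}) lies in ker(B - a), then the
   i-th block of M(A,B) v is a^i (sum_j A^j v_j). So the kernel contains the
   subspace of ker(B - a)^n cut out by the n linear equations sum_j A^j v_j = 0,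
   of dimension at least n m - n, and these subspaces are independent for
   distinct a because the eigenspaces are. Kernels being row spaces of the
   transpose in the library, the argument is run on B^T and row vectors. *)

Lemma trmxX (R : comPzRingType) (n : nat) (M : 'M[R]_n) (i : nat) :
  (M ^+ i)^T = M^T ^+ i.
Proof.
elim: i => [|i IHi]; first by rewrite !expr0 trmx1.
by rewrite exprS exprSr -!mulmxE trmx_mul IHi.
Qed.

Section BlockDiagonal.
Variables (F : fieldType) (k m : nat).

Definition blkdiag (S : 'M[F]_m) : 'M[F]_(\sum_(j < k) m) := \mxdiag_(j < k) S.

Lemma sub_blkdiagP p (X : 'M[F]_(p, \sum_(j < k) m)) (S : 'M[F]_m) :
  reflect (forall j, (submxrow X j <= S)%MS) (X <= blkdiag S)%MS.
Proof.
apply: (iffP idP) => [/submxP[Y ->] j|subXS].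
  by rewrite -[Y]submxrowK mul_mxrow_mxdiag mxrowK submxMl.
rewrite -[X]submxrowK.
rewrite (eq_mxrow (fun j => esym (mulmxKpV (subXS j)))).
by rewrite -mul_mxrow_mxdiag submxMl.
Qed.

Lemma blkdiagS (S T : 'M[F]_m) : (S <= T)%MS -> (blkdiag S <= blkdiag T)%MS.
Proof.
move=> subST; apply/sub_blkdiagP => j; apply: submx_trans subST.
by move: j; apply/sub_blkdiagP.
Qed.

Lemma blkdiag_cap_eq0 (S T : 'M[F]_m) :
  (S :&: T)%MS = 0 -> (blkdiag S :&: blkdiag T)%MS = 0.
Proof.
move=> capST0; set C := (blkdiag S :&: blkdiag T)%MS.
have C_S : (C <= blkdiag S)%MS by rewrite capmxSl.
have C_T : (C <= blkdiag T)%MS by rewrite capmxSr.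
have C0 j : submxrow C j = 0.
  apply/eqP; rewrite -submx0 -capST0 sub_capmx.
  by rewrite (sub_blkdiagP _ _ C_S) (sub_blkdiagP _ _ C_T).
by rewrite -[C]submxrowK (eq_mxrow C0) mxrow0.
Qed.

Lemma mxrank_blkdiag (S : 'M[F]_m) : \rank (blkdiag S) = (k * \rank S)%N.
Proof. by rewrite rank_mxdiag big_const_ord iter_addn_0 mulnC. Qed.

End BlockDiagonal.

Lemma mxrank_cap_kermx (F : fieldType) (p q r : nat)
    (X : 'M[F]_(p, q)) (C : 'M[F]_(q, r)) :
  (\rank X - r <= \rank (X :&: kermx C))%N.
Proof.
rewrite -(mxrank_mul_ker X C) leq_subLR leq_add2r.
exact: rank_leq_col.
Qed.

Lemma eigenspace_mulmxX (F : fieldType) (n p : nat) (M : 'M[F]_n) (a : F)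
    (X : 'M[F]_(p, n)) i :
  (X <= eigenspace M a)%MS -> X *m M ^+ i = a ^+ i *: X.
Proof.
move=> /eigenspaceP XM; elim: i => [|i IHi]; first by rewrite mulmx1 scale1r.
by rewrite exprSr -mulmxE mulmxA IHi -scalemxAl XM scalerA exprSr.
Qed.

Lemma eigenspace_cap_sum_eq0 (F : fieldType) (n : nat) (M : 'M[F]_n) a s :
  uniq (a :: s) -> (eigenspace M a :&: \sum_(b <- s) eigenspace M b)%MS = 0.
Proof.
move=> uniq_as; set t := a :: s.
have inj_t : {in predT &, injective (fun i : 'I_(size t) => nth 0 t i)}.
  by move=> i j _ _ /eqP; rewrite nth_uniq // => /eqP/val_inj.
have /mxdirect_sumsP/(_ ord0 isT) := @mxdirect_sum_eigenspace _ _ _ M _ _ inj_t.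
rewrite big_mkcond big_ord_recl /= adds0mx_id.
by rewrite [in X in _ -> X](big_nth 0) big_mkord.
Qed.

Section EigenKernel.
Variables (K : fieldType) (n : nat) (A B : 'M[K]_n).

Definition pow_trmx_col : 'M[K]_(\sum_(j < n) n, n) := \mxcol_(j < n) (A ^+ j)^T.

Definition eigen_kernel (a : K) :=
  (blkdiag n (eigenspace B^T a) :&: kermx pow_trmx_col)%MS.

Lemma blkdiag_eigenspace_mul_Mblock a :
  blkdiag n (eigenspace B^T a) *m (Mblock A B)^T =
  blkdiag n (eigenspace B^T a) *m pow_trmx_col *m \mxrow_(i < n) (a ^+ i)%:M.
Proof.
rewrite /Mblock tr_mxblock /pow_trmx_col -mulmxA mul_mxcol_mxrow.
rewrite /blkdiag !mul_mxdiag_mxblock; apply: eq_mxblock => j i.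
by rewrite trmx_mul !trmxX mulmxA [LHS]mulmxA (eigenspace_mulmxX _ (submx_refl _))
  mul_mx_scalar -scalemxAl.
Qed.

Lemma eigen_kernel_sub a : (eigen_kernel a <= kermx (Mblock A B)^T)%MS.
Proof.
have /sub_kermxP Wker : (eigen_kernel a <= kermx pow_trmx_col)%MS.
  exact: capmxSr.
have /submxP[X defW] : (eigen_kernel a <= blkdiag n (eigenspace B^T a))%MS.
  exact: capmxSl.
apply/sub_kermxP; rewrite defW -mulmxA blkdiag_eigenspace_mul_Mblock.
by rewrite !mulmxA -defW Wker mul0mx.
Qed.

Lemma mxrank_eigen_kernel a :
  (n * (\rank (eigenspace B^T a) - 1) <= \rank (eigen_kernel a))%N.
Proof. by rewrite mulnBr muln1 -(mxrank_blkdiag n) mxrank_cap_kermx. Qed.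

Lemma sum_eigen_kernel_sub_blkdiag s :
  (\sum_(b <- s) eigen_kernel b <= blkdiag n (\sum_(b <- s) eigenspace B^T b)%MS)%MS.
Proof.
elim: s => [|a s IHs]; first by rewrite !big_nil sub0mx.
rewrite !big_cons addsmx_sub; apply/andP; split.
  exact: submx_trans (capmxSl _ _) (blkdiagS n (addsmxSl _ _)).
exact: submx_trans IHs (blkdiagS n (addsmxSr _ _)).
Qed.

Lemma sum_eigen_kernel_sub s :
  (\sum_(b <- s) eigen_kernel b <= kermx (Mblock A B)^T)%MS.
Proof.
elim: s => [|a s IHs]; first by rewrite big_nil sub0mx.
by rewrite big_cons addsmx_sub eigen_kernel_sub.
Qed.

Lemma mxrank_sum_eigen_kernel s : uniq s ->
  (n * \sum_(b <- s) (\rank (eigenspace B^T b) - 1)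
     <= \rank (\sum_(b <- s) eigen_kernel b))%N.
Proof.
elim: s => [|a s IHs] uniq_as; first by rewrite !big_nil muln0.
have /andP[_ uniq_s] := uniq_as.
have cap0 : (eigen_kernel a :&: \sum_(b <- s) eigen_kernel b)%MS = 0.
  apply/eqP; rewrite -submx0.
  apply: submx_trans (capmxS (capmxSl _ _) (sum_eigen_kernel_sub_blkdiag s)) _.
  by rewrite blkdiag_cap_eq0 ?eigenspace_cap_sum_eq0.
have := mxrank_sum_cap (eigen_kernel a) (\sum_(b <- s) eigen_kernel b)%MS.
rewrite cap0 mxrank0 addn0 !big_cons mulnDr => ->.
exact: leq_add (mxrank_eigen_kernel a) (IHs uniq_s).
Qed.

End EigenKernel.

Lemma geom_mult_trmx (K : fieldType) (n : nat) (B : 'M[K]_n) a :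
  geom_mult B a = \rank (eigenspace B^T a).
Proof. by rewrite /geom_mult /dimker /eigenspace linearB /= tr_scalar_mx. Qed.

Theorem mainTheorem2 (K : fieldType) (n : nat) (A B : 'M[K]_n) (s : seq K) :
  uniq s -> (forall a : K, (a \in s) = eigenvalue B a) ->
  (n * \sum_(a <- s) (geom_mult B a - 1) <= dimker (Mblock A B))%N.
Proof.
(* A non-eigenvalue would contribute [0 - 1 = 0]: only distinctness matters. *)
move=> uniq_s _.
rewrite (eq_bigr _ (fun a _ => congr1 (subn^~ 1) (geom_mult_trmx B a))).
apply: leq_trans (mxrank_sum_eigen_kernel A B uniq_s) _.
exact/mxrankS/sum_eigen_kernel_sub.
Qed.
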